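(* Assume (C), (I) and (H). Then $Q^*\in\mathcal Q$ is a weak equilibrium if and only if $\Gamma^{Q^*}_i(Q^*_i)\ge\Gamma^{Q^*}_i(Q_i)$ for all $i\in S$ and all $Q\in\mathcal Q$.
   Context: Let $S=\{1,\dots,N\}$, $N\in\mathbb N$. For $i\in S$ let $E_i=\{q=(q_1,\dots,q_N)\in\mathbb R^N: q_j\ge0\text{ for }j\ne i,\ q_i=-\sum_{j\ne i}q_j\}$ and let $D_i\subseteq E_i$ be given. Let $\mathcal Q=\{Q\in\mathbb R^{N\times N}: Q_i\in D_i\ \forall i\in S\}$, where $Q_i$ is the $i$-th row of $Q$. For $Q\in\mathcal Q$, $X=(X_t)_{t\ge0}$ is a time-homogeneous continuous-time Markov chain on $S$ with generator $Q$, and $\mathbb E_{i,Q}$ is the expectation given $X_0=i$. A payoff function $f$ assigns a real number $f(t,i,\mathbf q)$ to each $t\ge0$, $i\in S$, $\mathbf q\in D_i$. Conditions: (C) $t\mapsto f(t,i,\mathbf q)$ is continuous on $[0,\infty)$ for each $i,\mathbf q$; (I) $\int_0^\infty\sup_{i\in S,\mathbf q\in D_i,\|\mathbf q\|\le c}|f(t,i,\mathbf q)|\,dt<\infty$ for every $c>0$; (H) there is a nonnegative function $h(t,\varepsilon;i,\mathbf q)$ with $|f(t+\varepsilon,i,\mathbf q)-f(t,i,\mathbf q)|\le h(t,\varepsilon;i,\mathbf q)$ for all $t\ge0,\varepsilon>0,i,\mathbf q$, $h$ nondecreasing in $\varepsilon$, $\lim_{\varepsilon\downarrow0}h=0$,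 and $\int_0^\infty h(t,\varepsilon;i,\mathbf q)dt<\infty$ for small $\varepsilon>0$. Define $F(i,Q)=\mathbb E_{i,Q}[\int_0^\infty f(t,X_t,Q_{X_t})dt]$ and $F(Q)=(F(1,Q),\dots,F(N,Q))$. For $Q,Q'\in\mathcal Q$, $\varepsilon>0$, $Q\otimes_\varepsilon Q'$ means $X$ evolves with generator $Q$ on $[0,\varepsilon]$ and $Q'$ on $(\varepsilon,\infty)$, and $F(i,Q\otimes_\varepsilon Q')$ is the corresponding expected payoff $\mathbb E_i[\int_0^\varepsilon f(t,X_t,Q_{X_t})dt+\int_\varepsilon^\infty f(t,X_t,Q'_{X_t})dt]$. $Q^*\in\mathcal Q$ is a weak equilibrium if $\liminf_{\varepsilon\downarrow0}\varepsilon^{-1}(F(i,Q^* )-F(i,Q\otimes_\varepsilon Q^* ))\ge0$ for all $Q\in\mathcal Q$, $i\in S$. For $Q^*\in\mathcal Q$, $i\in S$, $\mathbf q\in D_i$, $\Gamma^{Q^*}_i(\mathbf q)=f(0,i,\mathbf q)+\mathbf q\cdot F(Q^* )$. *)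

From Stdlib Require Import Reals Lra ClassicalEpsilon Factorial.
Open Scope R_scope.

(* States S = {1..N} are encoded as 0..N-1; vectors in R^N and N x N
   matrices are encoded as functions on nat (entries outside 0..N-1 unused). *)

Fixpoint sumR (n : nat) (g : nat -> R) : R :=
  match n with O => 0 | S m => sumR m g + g m end.

Definition row (Q : nat -> nat -> R) (i : nat) : nat -> R := fun j => Q i j.

Definition inE (N i : nat) (q : nat -> R) : Prop :=
  (forall j, (j < N)%nat -> j <> i -> 0 <= q j) /\
  q i = - sumR N (fun j => if Nat.eqb j i then 0 else q j) /\
  (forall j, (N <= j)%nat -> q j = 0).

Definition inQ (N : nat) (D : nat -> (nat -> R) -> Prop) (Q : nat -> nat -> R) : Prop :=
  forall i, (i < N)%nat -> D i (row Q i).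

Definition norm1 (N : nat) (q : nat -> R) : R := sumR N (fun j => Rabs (q j)).

Definition matmul (N : nat) (A B : nat -> nat -> R) : nat -> nat -> R :=
  fun i j => sumR N (fun k => A i k * B k j).

Fixpoint matpow (N : nat) (Q : nat -> nat -> R) (n : nat) : nat -> nat -> R :=
  match n with
  | O => fun i j => if Nat.eqb i j then 1 else 0
  | S m => matmul N (matpow N Q m) Q
  end.

(* transition matrix of the CTMC with generator Q: P(t) = exp(tQ),
   P_{ij}(t) = P_i(X_t = j) *)
Definition trans (N : nat) (Q : nat -> nat -> R) (t : R) (i j : nat) : R :=
  epsilon (inhabits 0)
    (fun l => infinite_sum (fun n => t ^ n / INR (fact n) * matpow N Q n i j) l).

(* Riemann integral over [a,b] (the integrands used below are Riemann integrable) *)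
Definition RInt (g : R -> R) (a b : R) : R :=
  epsilon (inhabits 0) (fun l => exists pr : Riemann_integrable g a b, RiemannInt pr = l).

Definition int_from (a : R) (g : R -> R) : R :=
  epsilon (inhabits 0) (fun l => forall eps, 0 < eps ->
     exists T0, forall T, T0 <= T -> Rabs (RInt g a T - l) < eps).

(* An extended-real function u on [0,oo) is described by its strict
   subgraph E t r  <->  r < u t.
   lint_finite G: the lower (Riemann) integral over [0,oo) of the function
   described by G is finite. *)
Definition lint_finite (G : R -> R -> Prop) : Prop :=
  exists M, forall (T : R) (phi : R -> R) (pr : Riemann_integrable phi 0 T),
    0 <= T -> (forall t r, 0 <= t <= T -> r < phi t -> G t r) ->
    RiemannInt pr <= M.

(* "int_0^oo u(t) dt < oo" (Lebesgue): u admits a lower semicontinuous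
   majorant with finite integral (Vitali-Caratheodory); for lsc g the
   Lebesgue integral equals the lower Riemann integral. *)
Definition int_finite (E : R -> R -> Prop) : Prop :=
  exists G : R -> R -> Prop,
    (forall t r r', r' <= r -> G t r -> G t r') /\
    (forall t r, 0 <= t -> G t r ->
       exists d, 0 < d /\ forall t', 0 <= t' -> Rabs (t' - t) < d -> G t' r) /\
    (forall t r, 0 <= t -> E t r -> G t r) /\
    lint_finite G.

Section Payoff.
Variables (N : nat) (D : nat -> (nat -> R) -> Prop)
          (f : R -> nat -> (nat -> R) -> R).

Definition condC : Prop :=
  forall i q, (i < N)%nat -> D i q ->
    forall t0, 0 <= t0 -> forall eps, 0 < eps -> exists d, 0 < d /\
      forall t, 0 <= t -> Rabs (t - t0) < d -> Rabs (f t i q - f t0 i q) < eps.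

Definition condI : Prop :=
  forall c, 0 < c ->
    int_finite (fun t r => exists i q, (i < N)%nat /\ D i q /\ norm1 N q <= c /\
                                       r < Rabs (f t i q)).

Definition condH : Prop :=
  exists h : R -> R -> nat -> (nat -> R) -> R,
    forall i q, (i < N)%nat -> D i q ->
      (forall t eps, 0 <= t -> 0 < eps -> 0 <= h t eps i q) /\
      (forall t eps, 0 <= t -> 0 < eps ->
          Rabs (f (t + eps) i q - f t i q) <= h t eps i q) /\
      (forall t e1 e2, 0 <= t -> 0 < e1 -> e1 <= e2 -> h t e1 i q <= h t e2 i q) /\
      (forall t, 0 <= t -> forall d, 0 < d -> exists e0, 0 < e0 /\
          forall eps, 0 < eps < e0 -> Rabs (h t eps i q) < d) /\
      (exists e0, 0 < e0 /\ forall eps, 0 < eps < e0 ->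
          int_finite (fun t r => r < h t eps i q)).

(* F(i,Q) = E_{i,Q}[ int_0^oo f(t, X_t, Q_{X_t}) dt ] *)
Definition Fval (Q : nat -> nat -> R) (i : nat) : R :=
  int_from 0 (fun t => sumR N (fun j => trans N Q t i j * f t j (row Q j))).

Definition Fcomp (Q Q' : nat -> nat -> R) (eps : R) (i : nat) : R :=
  RInt (fun t => sumR N (fun j => trans N Q t i j * f t j (row Q j))) 0 eps +
  int_from eps (fun t => sumR N (fun j =>
      sumR N (fun k => trans N Q eps i k * trans N Q' (t - eps) k j) * f t j (row Q' j))).

(* weak equilibrium: liminf_{eps -> 0+} (F(i,Qs) - F(i,Q (x)_eps Qs))/eps >= 0 *)
Definition weak_equilibrium (Qs : nat -> nat -> R) : Prop :=
  forall Q i, inQ N D Q -> (i < N)%nat ->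
    forall delta, 0 < delta -> exists eta, 0 < eta /\
      forall eps, 0 < eps < eta -> - delta <= (Fval Qs i - Fcomp Q Qs eps i) / eps.

Definition Gamma (Qs : nat -> nat -> R) (i : nat) (q : nat -> R) : R :=
  f 0 i q + sumR N (fun j => q j * Fval Qs j).

End Payoff.

From Pilot Require Import Defs.
From Stdlib Require Import Reals Lra Lia ClassicalEpsilon Factorial.
From Coquelicot Require Import Coquelicot.
Open Scope R_scope.

(* Fix Q and i, let P^Q_e = exp(eQ), let u_Q be the expected payoff rate of the chain with
   generator Q started in i, and let V_e(k) be the payoff collected after time e by the chain
   with generator Q* that is in state k at time e. By the Markov property
     F(i,Q* )         = int_0^e u_Q* + sum_k P^Q*_e(i,k) V_e(k),
     F(i,Q (x)_e Q* ) = int_0^e u_Q  + sum_k P^Q_e(i,k) V_e(k).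
   By (C) the payoff rates are continuous and by (I) they are dominated by an integrable
   function, so V_e is bounded and V_e -> V_0 = F(Q* ) as e -> 0+. Since P_e = I + eQ + o(e),
   the quotient (F(i,Q* ) - F(i,Q (x)_e Q* ))/e converges to
     f(0,i,Q*_i) - f(0,i,Q_i) + (Q*_i - Q_i).F(Q* ) = Gamma_i(Q*_i) - Gamma_i(Q_i),
   so its liminf is nonnegative for all Q exactly when Q*_i maximises Gamma_i. *)

(** * Finite sums *)

Definition kdelta (i j : nat) : R := if Nat.eqb i j then 1 else 0.

Lemma kdelta_sym i j : kdelta i j = kdelta j i.
Proof. unfold kdelta. now rewrite Nat.eqb_sym. Qed.

Lemma sumR_ext n g h : (forall k, (k < n)%nat -> g k = h k) -> sumR n g = sumR n h.
Proof.
  induction n as [|n IH]; intros H; simpl; auto.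
  rewrite IH, H; auto.
Qed.

Lemma sumR_zero n : sumR n (fun _ => 0) = 0.
Proof. induction n; simpl; lra. Qed.

Lemma sumR_plus n g h : sumR n (fun k => g k + h k) = sumR n g + sumR n h.
Proof. induction n; simpl; lra. Qed.

Lemma sumR_minus n g h : sumR n (fun k => g k - h k) = sumR n g - sumR n h.
Proof. induction n; simpl; lra. Qed.

Lemma sumR_scal_l n c g : sumR n (fun k => c * g k) = c * sumR n g.
Proof. induction n as [|n IH]; simpl; [ring|]. rewrite IH; ring. Qed.

Lemma sumR_scal_r n c g : sumR n (fun k => g k * c) = sumR n g * c.
Proof. induction n as [|n IH]; simpl; [ring|]. rewrite IH; ring. Qed.

Lemma sumR_swap n m g :
  sumR n (fun k => sumR m (fun l => g k l)) = sumR m (fun l => sumR n (fun k => g k l)).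
Proof.
  induction n as [|n IH]; simpl; [now rewrite sumR_zero|].
  rewrite IH. symmetry. apply sumR_plus.
Qed.

Lemma sumR_le n g h : (forall k, (k < n)%nat -> g k <= h k) -> sumR n g <= sumR n h.
Proof.
  induction n as [|n IH]; intros H; simpl; [lra|].
  apply Rplus_le_compat; [apply IH; intros; apply H|apply H]; lia.
Qed.

Lemma sumR_nonneg n g : (forall k, (k < n)%nat -> 0 <= g k) -> 0 <= sumR n g.
Proof. intros H. rewrite <- (sumR_zero n). now apply sumR_le. Qed.

Lemma sumR_term_le n g k :
  (k < n)%nat -> (forall l, (l < n)%nat -> 0 <= g l) -> g k <= sumR n g.
Proof.
  induction n as [|n IH]; intros Hk Hg; [lia|]. simpl.
  destruct (Nat.eq_dec k n) as [->|].
  - assert (0 <= sumR n g) by (apply sumR_nonneg; intros; apply Hg; lia). lra.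
  - assert (g k <= sumR n g) by (apply IH; [lia|intros; apply Hg; lia]).
    specialize (Hg n ltac:(lia)). lra.
Qed.

Lemma Rabs_sumR_le n g : Rabs (sumR n g) <= sumR n (fun k => Rabs (g k)).
Proof.
  induction n; simpl; [rewrite Rabs_R0; lra|].
  eapply Rle_trans; [apply Rabs_triang|lra].
Qed.

Lemma sumR_succ_l n g : sumR (S n) g = g O + sumR n (fun k => g (S k)).
Proof. induction n as [|n IH]; simpl in *; [lra|]. rewrite IH; lra. Qed.

Lemma sum_f_R0_sumR g n : sum_f_R0 g n = sumR (S n) g.
Proof. induction n as [|n IH]; simpl in *; [lra|]. now rewrite IH. Qed.

Lemma sumR_kdelta_r n g j : (j < n)%nat -> sumR n (fun k => g k * kdelta k j) = g j.
Proof.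
  induction n as [|n IH]; intros Hj; [lia|]. simpl. unfold kdelta at 2.
  destruct (Nat.eqb_spec n j) as [->|].
  - rewrite (sumR_ext _ _ (fun _ => 0)), sumR_zero; [ring|].
    intros k Hk. unfold kdelta. destruct (Nat.eqb_spec k j); [lia|ring].
  - rewrite IH by lia. ring.
Qed.

Lemma sumR_kdelta_l n g j : (j < n)%nat -> sumR n (fun k => kdelta j k * g k) = g j.
Proof.
  intros Hj. rewrite <- (sumR_kdelta_r n g j Hj).
  apply sumR_ext. intros k _. rewrite kdelta_sym. ring.
Qed.

Lemma sumR_split n g k :
  (k < n)%nat -> sumR n g = sumR n (fun j => if Nat.eqb j k then 0 else g j) + g k.
Proof.
  induction n as [|n IH]; intros Hk; [lia|]. simpl.
  destruct (Nat.eq_dec k n) as [->|].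
  - rewrite Nat.eqb_refl, (sumR_ext n (fun j => if Nat.eqb j n then 0 else g j) g); [lra|].
    intros j Hj. destruct (Nat.eqb_spec j n); [lia|auto].
  - rewrite IH by lia. destruct (Nat.eqb_spec n k); [lia|lra].
Qed.

Lemma sumR_argmax n (h : nat -> R) :
  (0 < n)%nat -> exists j, (j < n)%nat /\ forall k, (k < n)%nat -> h k <= h j.
Proof.
  induction n as [|[|n] IH]; intros Hn; [lia| |].
  - exists O. split; [lia|]. intros k Hk. replace k with O by lia. lra.
  - destruct IH as [j [Hj Hm]]; [lia|].
    destruct (Rle_dec (h (S n)) (h j)).
    + exists j. split; [lia|]. intros k Hk.
      destruct (Nat.eq_dec k (S n)) as [->|]; [auto|apply Hm; lia].
    + exists (S n). split; [lia|]. intros k Hk.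
      destruct (Nat.eq_dec k (S n)) as [->|]; [lra|].
      specialize (Hm k ltac:(lia)). lra.
Qed.


(** * The matrix exponential *)

Notation binom := Binomial.C.

Section MatrixPowers.
Variable N : nat.
Implicit Types (A B Q : nat -> nat -> R).

Lemma matmul_assoc A B C i j :
  matmul N (matmul N A B) C i j = matmul N A (matmul N B C) i j.
Proof.
  unfold matmul.
  transitivity (sumR N (fun k => sumR N (fun l => A i l * B l k * C k j))).
  - apply sumR_ext; intros. now rewrite <- sumR_scal_r.
  - rewrite sumR_swap. apply sumR_ext; intros. rewrite <- sumR_scal_l.
    apply sumR_ext; intros; ring.
Qed.

Lemma matpow_add A m n i j : (j < N)%nat ->
  matmul N (matpow N A m) (matpow N A n) i j = matpow N A (m + n) i j.
Proof.
  revert i j. induction n as [|n IH]; intros i j Hj.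
  - rewrite Nat.add_0_r. apply sumR_kdelta_r; auto.
  - rewrite Nat.add_succ_r. simpl. rewrite <- matmul_assoc.
    unfold matmul at 1 3. apply sumR_ext. intros k Hk. rewrite IH; auto.
Qed.

Lemma matpow_nonneg A n i j : (forall k l, (k < N)%nat -> (l < N)%nat -> 0 <= A k l) ->
  (j < N)%nat -> 0 <= matpow N A n i j.
Proof.
  intros HA. revert i j. induction n as [|n IH]; intros i j Hj.
  - unfold matpow, kdelta. destruct (Nat.eqb i j); lra.
  - apply sumR_nonneg. intros k Hk. apply Rmult_le_pos; auto.
Qed.

Definition mat_norm A : R := sumR N (fun k => sumR N (fun j => Rabs (A k j))).

Lemma mat_norm_ge0 A : 0 <= mat_norm A.
Proof. apply sumR_nonneg; intros; apply sumR_nonneg; intros; apply Rabs_pos. Qed.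

Lemma matpow_bound A n i j : (j < N)%nat -> Rabs (matpow N A n i j) <= mat_norm A ^ n.
Proof.
  revert i j. induction n as [|n IH]; intros i j Hj.
  - unfold matpow, kdelta. simpl. destruct (Nat.eqb i j); rewrite ?Rabs_R1, ?Rabs_R0; lra.
  - simpl. eapply Rle_trans; [apply Rabs_sumR_le|].
    apply Rle_trans with (sumR N (fun k => mat_norm A ^ n * Rabs (A k j))).
    + apply sumR_le. intros k Hk. rewrite Rabs_mult.
      apply Rmult_le_compat_r; [apply Rabs_pos|auto].
    + rewrite sumR_scal_l, Rmult_comm.
      apply Rmult_le_compat_r; [apply pow_le, mat_norm_ge0|].
      apply sumR_le. intros k Hk.
      apply (sumR_term_le N (fun l => Rabs (A k l))); auto. intros; apply Rabs_pos.
Qed.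

Lemma matpow_row_sum Q n i : (i < N)%nat ->
  (forall k, (k < N)%nat -> sumR N (fun j => Q k j) = 0) ->
  sumR N (fun j => matpow N Q n i j) = if Nat.eqb n 0 then 1 else 0.
Proof.
  intros Hi HQ. destruct n; simpl.
  - rewrite (sumR_ext _ _ (fun k => kdelta i k * 1)) by (intros; unfold kdelta; ring).
    now apply sumR_kdelta_l.
  - unfold matmul. rewrite sumR_swap.
    rewrite (sumR_ext _ _ (fun k => matpow N Q n i k * 0)), sumR_scal_r; [ring|].
    intros k Hk. now rewrite sumR_scal_l, HQ.
Qed.

Definition scalar_mx (c : R) : nat -> nat -> R := fun i j => c * kdelta i j.

Lemma matpow_scalar c n i j : (j < N)%nat -> matpow N (scalar_mx c) n i j = scalar_mx (c ^ n) i j.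
Proof.
  revert i j. induction n as [|n IH]; intros i j Hj; unfold scalar_mx in *; simpl.
  - unfold kdelta. ring.
  - unfold matmul.
    rewrite (sumR_ext _ _ (fun k => (c ^ n * c) * (kdelta i k * kdelta k j)))
      by (intros k Hk; rewrite IH by auto; ring).
    rewrite sumR_scal_l, sumR_kdelta_r by auto. ring.
Qed.

Lemma binom_pascal_sum (u : nat -> R) c n :
  sumR (S n) (fun m => binom n m * c ^ (n - m) * u (S m))
    + c * sumR (S n) (fun m => binom n m * c ^ (n - m) * u m)
  = sumR (S (S n)) (fun m => binom (S n) m * c ^ (S n - m) * u m).
Proof.
  rewrite (sumR_succ_l (S n) (fun m => binom (S n) m * c ^ (S n - m) * u m)).
  rewrite (sumR_succ_l n (fun m => binom n m * c ^ (n - m) * u m)).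
  change (sumR (S n) (fun k => binom (S n) (S k) * c ^ (S n - S k) * u (S k))) with
    (sumR n (fun k => binom (S n) (S k) * c ^ (S n - S k) * u (S k))
       + binom (S n) (S n) * c ^ (S n - S n) * u (S n)).
  rewrite (sumR_ext n (fun k => binom (S n) (S k) * c ^ (S n - S k) * u (S k))
     (fun k => binom n k * c ^ (n - k) * u (S k) + binom n (S k) * c ^ (n - k) * u (S k)))
    by (intros k Hk; rewrite <- pascal by auto; simpl (S n - S k)%nat; ring).
  rewrite sumR_plus, Rmult_plus_distr_l, <- sumR_scal_l.
  rewrite (sumR_ext n (fun k => c * (binom n (S k) * c ^ (n - S k) * u (S k)))
       (fun k => binom n (S k) * c ^ (n - k) * u (S k)))
    by (intros k Hk; replace (n - k)%nat with (S (n - S k)) by lia; simpl; ring).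
  simpl sumR. rewrite !C_n_0, !C_n_n, !Nat.sub_diag, !Nat.sub_0_r. simpl. ring.
Qed.

Lemma matpow_add_scalar Q c n i j : (j < N)%nat ->
  matpow N (fun k l => Q k l + scalar_mx c k l) n i j
  = sumR (S n) (fun m => binom n m * c ^ (n - m) * matpow N Q m i j).
Proof.
  revert i j. induction n as [|n IH]; intros i j Hj.
  - simpl. rewrite C_n_0. ring.
  - rewrite <- binom_pascal_sum. simpl matpow at 1. unfold matmul.
    set (P k := sumR (S n) (fun m => binom n m * c ^ (n - m) * matpow N Q m i k)).
    rewrite (sumR_ext _ _ (fun k => P k * Q k j + c * (P k * kdelta k j)))
      by (intros k Hk; unfold P, scalar_mx; rewrite IH by auto; ring).
    rewrite sumR_plus, sumR_scal_l, sumR_kdelta_r by auto. f_equal.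
    unfold P. rewrite (sumR_ext _ _ (fun k => sumR (S n)
        (fun m => binom n m * c ^ (n - m) * (matpow N Q m i k * Q k j)))).
    + rewrite sumR_swap. apply sumR_ext. intros m _. now rewrite sumR_scal_l.
    + intros. rewrite <- sumR_scal_r. apply sumR_ext. intros. ring.
Qed.

End MatrixPowers.

(* [is_series_ext] at type [R], so that [ring] applies to the resulting equations. *)
Lemma is_series_ext_R (a b : nat -> R) l :
  (forall n, a n = b n) -> is_series a l -> is_series b l.
Proof. apply is_series_ext. Qed.

Lemma is_series_exp x : is_series (fun n => x ^ n / INR (fact n)) (exp x).
Proof.
  generalize (is_exp_Reals x). apply is_series_ext.
  intros n. rewrite pow_n_pow. unfold scal; simpl; unfold mult, Rdiv; simpl. ring.
Qed.

Lemma is_series_term_le (a : nat -> R) l n : (forall m, 0 <= a m) -> is_series a l -> a n <= l.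
Proof.
  intros Ha H. apply Rle_trans with (sum_n a n).
  - destruct n; [rewrite sum_O; lra|].
    rewrite sum_Sn, sum_n_Reals, sum_f_R0_sumR. unfold plus; simpl.
    assert (0 <= sumR (S n) a) by (apply sumR_nonneg; auto). simpl in *. lra.
  - apply (is_lim_seq_incr_compare (sum_n a) l H). intros m.
    rewrite sum_Sn. unfold plus; simpl. specialize (Ha (S m)). lra.
Qed.

Lemma is_series_sumR n (u : nat -> nat -> R) l :
  (forall k, (k < n)%nat -> is_series (u k) (l k)) ->
  is_series (fun m => sumR n (fun k => u k m)) (sumR n l).
Proof.
  induction n as [|n IH]; intros H; simpl.
  - apply (filterlim_ext (fun _ => 0)); [|apply filterlim_const].
    intros m. rewrite sum_n_const. simpl. ring.
  - apply (is_series_plus (fun m => sumR n (fun k => u k m)) (u n)).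
    + apply IH. intros; apply H; lia.
    + apply H; lia.
Qed.

Section MatrixExponential.
Variable N : nat.
Implicit Types (A B Q : nat -> nat -> R).

Definition exp_coef A i j (n : nat) : R := matpow N A n i j / INR (fact n).

Lemma exp_coef_term_bound A i j n x : (j < N)%nat ->
  Rabs (exp_coef A i j n * x ^ n) <= (mat_norm N A * Rabs x) ^ n / INR (fact n).
Proof.
  intros Hj. unfold exp_coef, Rdiv.
  rewrite Rpow_mult_distr, !Rabs_mult, Rabs_inv, (Rabs_right (INR _)), <- RPow_abs
    by (apply Rle_ge, pos_INR).
  assert (0 < / INR (fact n)) by (apply Rinv_0_lt_compat, INR_fact_lt_0).
  assert (Rabs (matpow N A n i j) <= mat_norm N A ^ n) by (apply matpow_bound; auto).
  assert (0 <= Rabs x ^ n) by (apply pow_le, Rabs_pos).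
  assert (0 <= Rabs (matpow N A n i j)) by apply Rabs_pos.
  apply Rle_trans with (mat_norm N A ^ n * / INR (fact n) * Rabs x ^ n); [|lra].
  apply Rmult_le_compat_r; [auto|]. apply Rmult_le_compat_r; lra.
Qed.

Lemma CV_radius_exp_coef A i j x : (j < N)%nat ->
  Rbar_lt (Rabs x) (CV_radius (exp_coef A i j)).
Proof.
  intros Hj. destruct (CV_radius_bounded (exp_coef A i j)) as [Hub _].
  set (r := Rabs x + 1).
  assert (Hr : Rbar_le r (CV_radius (exp_coef A i j))).
  { apply Hub. exists (exp (mat_norm N A * Rabs r)). intros n.
    eapply Rle_trans; [apply exp_coef_term_bound; auto|].
    apply (is_series_term_le (fun n => (mat_norm N A * Rabs r) ^ n / INR (fact n)));
      [|apply is_series_exp].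
    intros m. apply Rmult_le_pos.
    - apply pow_le, Rmult_le_pos; [apply mat_norm_ge0|apply Rabs_pos].
    - left; apply Rinv_0_lt_compat, INR_fact_lt_0. }
  destruct (CV_radius (exp_coef A i j)); simpl in *; auto. unfold r in Hr. lra.
Qed.

Lemma is_series_exp_coef A t i j : (j < N)%nat ->
  is_series (fun n => t ^ n / INR (fact n) * matpow N A n i j) (PSeries (exp_coef A i j) t).
Proof.
  intros Hj.
  generalize (PSeries_correct _ _ (CV_radius_inside _ _ (CV_radius_exp_coef A i j t Hj))).
  apply is_series_ext_R. intros n. rewrite pow_n_pow.
  unfold scal; simpl; unfold mult, exp_coef, Rdiv; simpl. ring.
Qed.

Lemma trans_PSeries A t i j : (j < N)%nat -> trans N A t i j = PSeries (exp_coef A i j) t.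
Proof.
  intros Hj. pose proof (is_series_exp_coef A t i j Hj) as H.
  assert (Ht : is_series (fun n => t ^ n / INR (fact n) * matpow N A n i j) (trans N A t i j)).
  { apply is_series_Reals. unfold trans. apply epsilon_spec.
    exists (PSeries (exp_coef A i j) t). now apply is_series_Reals. }
  exact (filterlim_locally_unique _ _ _ Ht H).
Qed.

Lemma is_series_trans A t i j : (j < N)%nat ->
  is_series (fun n => t ^ n / INR (fact n) * matpow N A n i j) (trans N A t i j).
Proof. intros Hj. rewrite trans_PSeries by auto. now apply is_series_exp_coef. Qed.

Lemma trans_continuous A i j t : (j < N)%nat -> continuous (fun s => trans N A s i j) t.
Proof.
  intros Hj. apply (continuous_ext (PSeries (exp_coef A i j))).
  - intros s. now rewrite trans_PSeries.
  - apply continuity_pt_filterlim, PSeries_continuity, CV_radius_exp_coef; auto.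
Qed.

Lemma trans_0 A i j : (j < N)%nat -> trans N A 0 i j = kdelta i j.
Proof.
  intros Hj. rewrite trans_PSeries, PSeries_0 by auto. unfold exp_coef. simpl. unfold kdelta. field.
Qed.

Lemma is_derive_trans_0 A i j : (i < N)%nat -> (j < N)%nat ->
  is_derive (fun s => trans N A s i j) 0 (A i j).
Proof.
  intros Hi Hj. apply (is_derive_ext (PSeries (exp_coef A i j))).
  { intros s. now rewrite trans_PSeries. }
  replace (A i j) with (PSeries (PS_derive (exp_coef A i j)) 0).
  - apply is_derive_PSeries, CV_radius_exp_coef; auto.
  - rewrite PSeries_0. unfold PS_derive, exp_coef. simpl. unfold matmul.
    rewrite (sumR_ext _ _ (fun k => kdelta i k * A k j)) by (intros; unfold kdelta; ring).
    rewrite sumR_kdelta_l by auto. field.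
Qed.

Lemma ex_series_abs_exp_coef A s i k : (k < N)%nat ->
  ex_series (fun m => Rabs (s ^ m / INR (fact m) * matpow N A m i k)).
Proof.
  intros Hk.
  apply (ex_series_le (V := R_CompleteNormedModule) _
           (fun m => (mat_norm N A * Rabs s) ^ m / INR (fact m))).
  - intros n. change (norm (Rabs ?x)) with (Rabs (Rabs x)). rewrite Rabs_Rabsolu.
    replace (s ^ n / INR (fact n) * matpow N A n i k) with (exp_coef A i k n * s ^ n)
      by (unfold exp_coef, Rdiv; ring).
    now apply exp_coef_term_bound.
  - eexists. apply is_series_exp.
Qed.

Lemma is_series_trans_matmul A B s t i j : (j < N)%nat ->
  is_series (fun n => sum_f_R0 (fun m => (s ^ m / INR (fact m)) * (t ^ (n - m) / INR (fact (n - m)))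
       * matmul N (matpow N A m) (matpow N B (n - m)) i j) n)
    (sumR N (fun k => trans N A s i k * trans N B t k j)).
Proof.
  intros Hj.
  assert (H : forall k, (k < N)%nat -> is_series
    (fun n => sum_f_R0 (fun m => (s ^ m / INR (fact m) * matpow N A m i k) *
                                 (t ^ (n - m) / INR (fact (n - m)) * matpow N B (n - m) k j)) n)
    (trans N A s i k * trans N B t k j)).
  { intros k Hk.
    apply (is_series_mult (fun m => s ^ m / INR (fact m) * matpow N A m i k)
                          (fun m => t ^ m / INR (fact m) * matpow N B m k j));
      auto using is_series_trans, ex_series_abs_exp_coef. }
  generalize (is_series_sumR N _ _ H). apply is_series_ext_R. intros n.
  rewrite (sumR_ext N _ (fun k => sumR (S n) (fun m => (s ^ m / INR (fact m) * matpow N A m i k) *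
             (t ^ (n - m) / INR (fact (n - m)) * matpow N B (n - m) k j))))
    by (intros; apply sum_f_R0_sumR).
  rewrite sumR_swap, sum_f_R0_sumR. apply sumR_ext. intros m _.
  unfold matmul. rewrite <- sumR_scal_l. apply sumR_ext. intros; ring.
Qed.

Lemma exp_coef_binom n m s t : (m <= n)%nat ->
  s ^ m / INR (fact m) * (t ^ (n - m) / INR (fact (n - m)))
  = binom n m * s ^ m * t ^ (n - m) / INR (fact n).
Proof.
  intros Hm. unfold Binomial.C.
  assert (INR (fact m) <> 0) by apply INR_fact_neq_0.
  assert (INR (fact (n - m)) <> 0) by apply INR_fact_neq_0.
  assert (INR (fact n) <> 0) by apply INR_fact_neq_0.
  field. auto.
Qed.

Lemma trans_add A s t i j : (j < N)%nat ->
  trans N A (s + t) i j = sumR N (fun k => trans N A s i k * trans N A t k j).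
Proof.
  intros Hj.
  apply (filterlim_locally_unique (sum_n _) _ _ (is_series_trans A (s + t) i j Hj)).
  generalize (is_series_trans_matmul A A s t i j Hj). apply is_series_ext_R. intros n.
  rewrite binomial, !sum_f_R0_sumR.
  rewrite (sumR_ext _ _
             (fun m => (binom n m * s ^ m * t ^ (n - m)) * (matpow N A n i j / INR (fact n)))).
  - rewrite sumR_scal_r. unfold Rdiv. ring.
  - intros m Hm. rewrite matpow_add, exp_coef_binom by lia.
    replace (m + (n - m))%nat with n by lia. unfold Rdiv. ring.
Qed.

Lemma trans_scalar c t k j : (j < N)%nat -> trans N (scalar_mx c) t k j = exp (c * t) * kdelta k j.
Proof.
  intros Hj.
  apply (filterlim_locally_unique (sum_n _) _ _ (is_series_trans (scalar_mx c) t k j Hj)).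
  rewrite Rmult_comm.
  apply (is_series_ext_R (fun n => kdelta k j * ((c * t) ^ n / INR (fact n)))).
  - intros n. rewrite matpow_scalar by auto. unfold scalar_mx. rewrite Rpow_mult_distr.
    unfold Rdiv. ring.
  - exact (is_series_scal_l (kdelta k j) _ _ (is_series_exp (c * t))).
Qed.

Lemma trans_add_scalar A c t i j : (j < N)%nat ->
  trans N (fun k l => A k l + scalar_mx c k l) t i j = exp (c * t) * trans N A t i j.
Proof.
  intros Hj.
  apply (filterlim_locally_unique (sum_n _) _ _ (is_series_trans _ t i j Hj)).
  replace (exp (c * t) * trans N A t i j)
    with (sumR N (fun k => trans N A t i k * trans N (scalar_mx c) t k j)).
  - generalize (is_series_trans_matmul A (scalar_mx c) t t i j Hj). apply is_series_ext_R. intros n.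
    rewrite matpow_add_scalar, sum_f_R0_sumR, <- sumR_scal_l by auto.
    apply sumR_ext. intros m Hm. rewrite exp_coef_binom by lia.
    unfold matmul. rewrite (sumR_ext _ _ (fun k => (c ^ (n - m)) * (matpow N A m i k * kdelta k j)))
      by (intros; rewrite matpow_scalar by auto; unfold scalar_mx; ring).
    rewrite sumR_scal_l, sumR_kdelta_r by auto.
    replace (t ^ n) with (t ^ m * t ^ (n - m)) by (rewrite <- pow_add; f_equal; lia).
    unfold Rdiv. ring.
  - rewrite (sumR_ext _ _ (fun k => (exp (c * t) * trans N A t i k) * kdelta k j)).
    + now rewrite sumR_kdelta_r.
    + intros k _. rewrite trans_scalar by auto. ring.
Qed.

End MatrixExponential.

Section Generators.
Variables (N : nat) (Q : nat -> nat -> R).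

Definition is_generator : Prop := forall k, (k < N)%nat -> inE N k (row Q k).

Hypothesis HQ : is_generator.

Lemma generator_row_sum k : (k < N)%nat -> sumR N (fun j => Q k j) = 0.
Proof.
  intros Hk. destruct (HQ k Hk) as [_ [Hdiag _]]. unfold row in Hdiag.
  rewrite (sumR_split N _ k Hk), Hdiag. lra.
Qed.

(* Q + cI has nonnegative entries for c large, and exp(t(Q + cI)) = e^(ct) exp(tQ). *)
Lemma trans_nonneg t i j : 0 <= t -> (j < N)%nat -> 0 <= trans N Q t i j.
Proof.
  intros Ht Hj.
  set (c := sumR N (fun k => Rabs (Q k k))).
  set (Qc k l := Q k l + scalar_mx c k l).
  assert (Hpos : forall k l, (k < N)%nat -> (l < N)%nat -> 0 <= Qc k l).
  { intros k l Hk Hl. unfold Qc, scalar_mx, kdelta.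
    destruct (Nat.eqb_spec k l) as [<-|Hkl].
    - assert (Rabs (Q k k) <= c)
        by (apply (sumR_term_le N (fun k => Rabs (Q k k))); auto; intros; apply Rabs_pos).
      pose proof (Rabs_maj2 (Q k k)). lra.
    - destruct (HQ k Hk) as [Hoff _]. specialize (Hoff l Hl (not_eq_sym Hkl)).
      unfold row in Hoff. lra. }
  assert (Hterm : forall n, 0 <= t ^ n / INR (fact n) * matpow N Qc n i j).
  { intros n. apply Rmult_le_pos; [|apply matpow_nonneg; auto].
    apply Rmult_le_pos; [apply pow_le; auto|].
    left; apply Rinv_0_lt_compat, INR_fact_lt_0. }
  assert (H0 : 0 <= trans N Qc t i j).
  { eapply Rle_trans; [apply (Hterm O)|].
    apply (is_series_term_le (fun n => t ^ n / INR (fact n) * matpow N Qc n i j));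
      auto using is_series_trans. }
  unfold Qc in H0. rewrite trans_add_scalar in H0 by auto.
  apply (Rmult_le_reg_l (exp (c * t))); [apply exp_pos|lra].
Qed.

Lemma trans_row_sum t i : (i < N)%nat -> sumR N (fun j => trans N Q t i j) = 1.
Proof.
  intros Hi.
  set (a n := sumR N (fun j => t ^ n / INR (fact n) * matpow N Q n i j)).
  assert (H1 : is_series a (sumR N (fun j => trans N Q t i j)))
    by (apply is_series_sumR; intros; apply is_series_trans; auto).
  assert (H2 : is_series a 1).
  { apply (filterlim_ext (fun _ => 1)); [|apply filterlim_const].
    intros n. rewrite sum_n_Reals, sum_f_R0_sumR, sumR_succ_l. unfold a.
    rewrite sumR_scal_l, matpow_row_sum by auto using generator_row_sum.
    rewrite (sumR_ext n _ (fun _ => 0)), sumR_zero; [simpl; field|].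
    intros k _. rewrite sumR_scal_l, matpow_row_sum by auto using generator_row_sum.
    simpl. ring. }
  exact (filterlim_locally_unique _ _ _ H1 H2).
Qed.

Lemma Rabs_trans_average_le t k (v : nat -> R) : 0 <= t -> (k < N)%nat ->
  exists j, (j < N)%nat /\ Rabs (sumR N (fun j => trans N Q t k j * v j)) <= Rabs (v j).
Proof.
  intros Ht Hk. destruct (sumR_argmax N (fun j => Rabs (v j))) as [j0 [Hj0 Hmax]]; [lia|].
  exists j0. split; auto. eapply Rle_trans; [apply Rabs_sumR_le|].
  rewrite <- (Rmult_1_l (Rabs (v j0))), <- (trans_row_sum t k Hk), <- sumR_scal_r.
  apply sumR_le. intros j Hj.
  rewrite Rabs_mult, (Rabs_right (trans _ _ _ _ _)) by (apply Rle_ge, trans_nonneg; auto).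
  apply Rmult_le_compat_l; [apply trans_nonneg|apply Hmax]; auto.
Qed.

End Generators.

(** * Limits and improper integrals *)

Lemma filterlim_Rplus {T} {F : (T -> Prop) -> Prop} {FF : Filter F} (g h : T -> R) lg lh :
  filterlim g F (locally lg) -> filterlim h F (locally lh) ->
  filterlim (fun x => g x + h x) F (locally (lg + lh)).
Proof. intros Hg Hh. exact (filterlim_comp_2 g h Rplus Hg Hh (filterlim_plus lg lh)). Qed.

Lemma filterlim_Rmult {T} {F : (T -> Prop) -> Prop} {FF : Filter F} (g h : T -> R) lg lh :
  filterlim g F (locally lg) -> filterlim h F (locally lh) ->
  filterlim (fun x => g x * h x) F (locally (lg * lh)).
Proof. intros Hg Hh. exact (filterlim_comp_2 g h Rmult Hg Hh (filterlim_mult lg lh)). Qed.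

Lemma continuous_sumR n (g : nat -> R -> R) x :
  (forall k, (k < n)%nat -> continuous (g k) x) -> continuous (fun t => sumR n (fun k => g k t)) x.
Proof.
  induction n as [|n IH]; intros H; simpl; [apply continuous_const|].
  apply (continuous_plus (fun t => sumR n (fun k => g k t)) (g n));
    [apply IH; intros; apply H|apply H]; lia.
Qed.

Lemma ex_RInt_continuous_R (g : R -> R) a b : (forall x, continuous g x) -> ex_RInt g a b.
Proof. intros Hg. apply (ex_RInt_continuous (V := R_CompleteNormedModule)). auto. Qed.

Lemma ex_RInt_sumR n (g : nat -> R -> R) a b : (forall k, (k < n)%nat -> ex_RInt (g k) a b) ->
  ex_RInt (fun t => sumR n (fun k => g k t)) a b.
Proof.
  induction n as [|n IH]; intros H; simpl; [apply ex_RInt_const|].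
  apply (ex_RInt_plus (fun t => sumR n (fun k => g k t)) (g n)); [apply IH; intros|]; apply H; lia.
Qed.

Lemma RInt_sumR n (g : nat -> R -> R) a b : (forall k, (k < n)%nat -> ex_RInt (g k) a b) ->
  RInt (fun t => sumR n (fun k => g k t)) a b = sumR n (fun k => RInt (g k) a b).
Proof.
  induction n as [|n IH]; intros H; simpl.
  - rewrite RInt_const. unfold scal; simpl; unfold mult; simpl. ring.
  - assert (Hs : ex_RInt (fun t => sumR n (fun k => g k t)) a b)
      by (apply ex_RInt_sumR; intros; apply H; lia).
    rewrite (RInt_plus _ (g n)) by (exact Hs || (apply H; lia)).
    unfold plus; simpl. now rewrite IH by (intros; apply H; lia).
Qed.

Lemma RInt_nonneg_incr (h : R -> R) a T1 T2 : (forall x, continuous h x) -> (forall t, 0 <= h t) ->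
  a <= T1 <= T2 -> RInt h a T1 <= RInt h a T2.
Proof.
  intros Hc H0 HT.
  rewrite <- (RInt_Chasles h a T1 T2) by (apply ex_RInt_continuous_R; auto).
  assert (0 <= RInt h T1 T2) by (apply RInt_ge_0; auto; [lra|apply ex_RInt_continuous_R; auto]).
  unfold plus; simpl. lra.
Qed.

Definition is_RInt_from (a : R) (g : R -> R) (l : R) : Prop :=
  filterlim (fun T => RInt g a T) (Rbar_locally p_infty) (locally l).

Lemma is_RInt_from_eps a g l : is_RInt_from a g l <->
  forall eps, 0 < eps -> exists T0, forall T, T0 <= T -> Rabs (RInt g a T - l) < eps.
Proof.
  unfold is_RInt_from. rewrite filterlim_locally. split.
  - intros H eps Heps. destruct (H (mkposreal eps Heps)) as [M HM].
    exists (M + 1). intros T HT. apply (HM T). lra.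
  - intros H eps. destruct (H eps (cond_pos eps)) as [T0 HT0].
    exists T0. intros T HT. apply HT0. lra.
Qed.

Lemma Defs_RInt_eq g a b : ex_RInt g a b -> Defs.RInt g a b = RInt g a b.
Proof.
  intros H. pose proof (ex_RInt_Reals_0 _ _ _ H) as pr. unfold Defs.RInt.
  destruct (epsilon_spec (inhabits 0)
              (fun l => exists pr0 : Riemann_integrable g a b, RiemannInt pr0 = l))
    as [pr' <-]; [now exists (RiemannInt pr), pr|].
  now rewrite (RInt_Reals g a b pr').
Qed.

Lemma int_from_eq a g l : (forall T, a <= T -> ex_RInt g a T) ->
  is_RInt_from a g l -> int_from a g = l.
Proof.
  intros Hex Hl.
  assert (Hev : forall T0 T, Rmax a T0 <= T -> T0 <= T /\ Defs.RInt g a T = RInt g a T).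
  { intros T0 T HT. pose proof (Rmax_l a T0). pose proof (Rmax_r a T0).
    split; [lra|apply Defs_RInt_eq, Hex; lra]. }
  assert (HD : forall l', is_RInt_from a g l' <-> forall eps, 0 < eps ->
     exists T0, forall T, T0 <= T -> Rabs (Defs.RInt g a T - l') < eps).
  { intros l'. rewrite is_RInt_from_eps.
    split; intros H eps Heps; destruct (H eps Heps) as [T0 HT0]; exists (Rmax a T0);
      intros T HT; destruct (Hev T0 T HT) as [HT' Heq]; specialize (HT0 T HT');
      [rewrite Heq|rewrite <- Heq]; exact HT0. }
  assert (Hi : is_RInt_from a g (int_from a g)).
  { apply HD. unfold int_from. apply epsilon_spec. exists l. now apply HD. }
  exact (filterlim_locally_unique _ _ _ Hi Hl).
Qed.

Lemma is_RInt_from_ext a g1 g2 l : (forall t, a < t -> g1 t = g2 t) ->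
  is_RInt_from a g1 l -> is_RInt_from a g2 l.
Proof.
  intros Heq. apply filterlim_ext_loc. exists a. intros T HT.
  apply RInt_ext. intros x. rewrite Rmin_left, Rmax_right by lra. intros Hx. apply Heq. lra.
Qed.

Lemma int_from_ext_eq a g1 g2 l : (forall x, continuous g2 x) -> (forall t, a < t -> g1 t = g2 t) ->
  is_RInt_from a g2 l -> int_from a g1 = l.
Proof.
  intros Hc Heq Hl. apply int_from_eq.
  - intros T HT. apply (ex_RInt_ext g2); [|now apply ex_RInt_continuous_R].
    intros x. rewrite Rmin_left, Rmax_right by lra. intros Hx. symmetry. apply Heq. lra.
  - apply (is_RInt_from_ext a g2); auto. intros t Ht. symmetry. auto.
Qed.

Lemma is_RInt_from_lin_comb n a (g : nat -> R -> R) (c l : nat -> R) :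
  (forall k, (k < n)%nat -> forall x, continuous (g k) x) ->
  (forall k, (k < n)%nat -> is_RInt_from a (g k) (l k)) ->
  is_RInt_from a (fun t => sumR n (fun k => c k * g k t)) (sumR n (fun k => c k * l k)).
Proof.
  intros Hc Hl. unfold is_RInt_from.
  apply (filterlim_ext (fun T => sumR n (fun k => c k * RInt (g k) a T))).
  { intros T. rewrite RInt_sumR.
    - apply sumR_ext. intros k Hk. symmetry.
      apply (RInt_scal (V := R_CompleteNormedModule)), ex_RInt_continuous_R; auto.
    - intros k Hk. apply (ex_RInt_scal (g k)), ex_RInt_continuous_R; auto. }
  clear Hc. induction n as [|n IH]; simpl; [apply filterlim_const|].
  apply filterlim_Rplus; [apply IH; intros; apply Hl; lia|].
  apply filterlim_Rmult; [apply filterlim_const|apply Hl; lia].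
Qed.

Lemma is_RInt_from_Chasles a b g l : a <= b -> (forall x, continuous g x) ->
  is_RInt_from a g l -> is_RInt_from b g (l - RInt g a b).
Proof.
  intros Hab Hc Hl. unfold is_RInt_from.
  apply (filterlim_ext (fun T => RInt g a T + (- RInt g a b))).
  { intros T. rewrite <- (RInt_Chasles g a b T) by (apply ex_RInt_continuous_R; auto).
    unfold plus; simpl. ring. }
  apply filterlim_Rplus; [exact Hl|apply filterlim_const].
Qed.

Lemma Rabs_RInt_from_le a g l B : is_RInt_from a g l ->
  (forall T, a <= T -> Rabs (RInt g a T) <= B) -> Rabs l <= B.
Proof.
  intros Hl HB.
  apply (filterlim_le (F := Rbar_locally p_infty) (fun x => Rabs (RInt g a x)) (fun _ => B)
           (Rabs l) B).
  - exists a. intros T HT. apply HB. lra.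
  - eapply filterlim_comp; [exact Hl|apply continuous_Rabs].
  - apply filterlim_const.
Qed.

Lemma ex_lim_p_infty_incr (F : R -> R) a M :
  (forall T1 T2, a <= T1 <= T2 -> F T1 <= F T2) -> (forall T, a <= T -> F T <= M) ->
  exists l, filterlim F (Rbar_locally p_infty) (locally l).
Proof.
  intros Hincr Hbnd.
  set (E x := exists T, a <= T /\ x = F T).
  destruct (completeness E) as [l [Hub Hlub]].
  { exists M. intros x [T [HT ->]]. auto. }
  { exists (F a), a. split; [lra|auto]. }
  exists l. apply filterlim_locally. intros eps.
  assert (exists T, a <= T /\ l - eps < F T) as [T1 [HT1 HF1]].
  { apply Classical_Prop.NNPP. intros Hn. assert (l <= l - eps) by
      (apply Hlub; intros x [T [HT ->]]; apply Rnot_lt_le; intros Hc; apply Hn; now exists T).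
    pose proof (cond_pos eps). lra. }
  exists T1. intros T HT.
  assert (F T1 <= F T) by (apply Hincr; lra).
  assert (F T <= l) by (apply Hub; exists T; split; [lra|auto]).
  change (Rabs (F T - l) < eps). rewrite Rabs_left1 by lra. lra.
Qed.

Lemma ex_RInt_from_abs_bounded a g M : (forall x, continuous g x) ->
  (forall T, a <= T -> RInt (fun t => Rabs (g t)) a T <= M) -> exists l, is_RInt_from a g l.
Proof.
  intros Hc HM.
  set (ga := fun t : R => Rabs (g t)).
  assert (Cabs : forall x, continuous ga x) by (intros; apply continuous_Rabs_comp; auto).
  assert (Cpos : forall x, continuous (fun t => ga t + g t) x)
    by (intros; apply (continuous_plus ga g); auto).
  assert (Hsplit : forall T, RInt (fun t => ga t + g t) a T = RInt ga a T + RInt g a T).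
  { intros T. apply (RInt_plus (V := R_CompleteNormedModule)); apply ex_RInt_continuous_R; auto. }
  destruct (ex_lim_p_infty_incr (fun T => RInt (fun t => ga t + g t) a T) a (2 * M))
    as [lp Hlp].
  { intros. apply RInt_nonneg_incr; auto. intros t. pose proof (Rabs_maj2 (g t)). unfold ga. lra. }
  { intros T HT. rewrite Hsplit. specialize (HM T HT).
    assert (RInt g a T <= RInt ga a T)
      by (apply RInt_le; auto using ex_RInt_continuous_R; intros; apply Rle_abs).
    change (RInt ga a T <= M) in HM. lra. }
  destruct (ex_lim_p_infty_incr (fun T => RInt ga a T) a M) as [la Hla];
    [intros; apply RInt_nonneg_incr; auto; intros; apply Rabs_pos|auto|].
  exists (lp + (-1) * la). unfold is_RInt_from.
  apply (filterlim_ext (fun T => RInt (fun t => ga t + g t) a T + (-1) * RInt ga a T)).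
  { intros T. rewrite Hsplit. ring. }
  apply filterlim_Rplus; [exact Hlp|].
  apply filterlim_Rmult; [apply filterlim_const|exact Hla].
Qed.

Lemma filterlim_at_right_continuous (g : R -> R) x :
  continuous g x -> filterlim g (at_right x) (locally (g x)).
Proof.
  apply filterlim_filter_le_1. intros P HP. unfold at_right, within.
  now apply (filter_imp P).
Qed.

Lemma filterlim_at_right_0_eps (g : R -> R) l : filterlim g (at_right 0) (locally l) <->
  forall eps, 0 < eps -> exists d, 0 < d /\ forall x, 0 < x < d -> Rabs (g x - l) < eps.
Proof.
  rewrite filterlim_locally. split.
  - intros H eps Heps. destruct (H (mkposreal eps Heps)) as [d Hd].
    exists d. split; [apply cond_pos|]. intros x Hx. apply Hd; [|lra].
    change (Rabs (x - 0) < d). rewrite Rminus_0_r, Rabs_right; lra.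
  - intros H eps. destruct (H eps (cond_pos eps)) as [d [Hd Hx]].
    exists (mkposreal d Hd). intros x Hball Hx0. apply Hx. split; auto.
    change (Rabs (x - 0) < d) in Hball. rewrite Rminus_0_r, Rabs_right in Hball; lra.
Qed.

Lemma filterlim_sumR {T} {F : (T -> Prop) -> Prop} {FF : Filter F} n (g : nat -> T -> R)
  (l : nat -> R) : (forall k, (k < n)%nat -> filterlim (g k) F (locally (l k))) ->
  filterlim (fun x => sumR n (fun k => g k x)) F (locally (sumR n l)).
Proof.
  induction n as [|n IH]; intros H; simpl; [apply filterlim_const|].
  apply filterlim_Rplus; [apply IH; intros|]; apply H; lia.
Qed.

Lemma filterlim_at_right_0_le (g h : R -> R) l :
  (forall x, 0 < x -> Rabs (g x - l) <= h x) -> filterlim h (at_right 0) (locally 0) ->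
  filterlim g (at_right 0) (locally l).
Proof.
  intros Hgh Hh. rewrite filterlim_at_right_0_eps in *.
  intros eps Heps. destruct (Hh eps Heps) as [d [Hd Hx]]. exists d. split; auto.
  intros x Hx'. specialize (Hx x Hx'). specialize (Hgh x ltac:(lra)).
  rewrite Rminus_0_r in Hx. pose proof (Rle_abs (h x)). lra.
Qed.

Lemma is_derive_at_right_quotient (g : R -> R) l :
  is_derive g 0 l -> filterlim (fun x => (g x - g 0) / x) (at_right 0) (locally l).
Proof.
  intros H. apply is_derive_Reals in H. apply filterlim_at_right_0_eps.
  intros eps Heps. destruct (H eps Heps) as [d Hd]. exists d. split; [apply cond_pos|].
  intros x Hx. specialize (Hd x ltac:(lra) ltac:(rewrite Rabs_right; lra)).
  now rewrite Rplus_0_l in Hd.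
Qed.

Lemma RInt_average_at_right_0 (u : R -> R) : (forall x, continuous u x) ->
  filterlim (fun x => RInt u 0 x / x) (at_right 0) (locally (u 0)).
Proof.
  intros Hc. apply (filterlim_ext (fun x => (RInt u 0 x - RInt u 0 0) / x)).
  { intros x. rewrite RInt_point. unfold zero; simpl. f_equal. ring. }
  apply (is_derive_at_right_quotient (fun b => RInt u 0 b)).
  apply (is_derive_RInt u (fun b => RInt u 0 b) 0 0); auto.
  apply filter_forall. intros b. apply (RInt_correct (V := R_CompleteNormedModule)).
  now apply ex_RInt_continuous_R.
Qed.

Lemma RInt_continuous_upper (u : R -> R) a x : (forall t, continuous u t) ->
  continuous (fun b => RInt u a b) x.
Proof.
  intros Hc. apply continuity_pt_filterlim.
  assert (H : derivable_pt_lim (fun b => RInt u a b) x (u x)).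
  { apply is_derive_Reals, (is_derive_RInt u (fun b => RInt u a b) a x); auto.
  apply filter_forall. intros b. apply (RInt_correct (V := R_CompleteNormedModule)).
  now apply ex_RInt_continuous_R. }
  exact (derivable_continuous_pt _ x (exist _ (u x) H)).
Qed.

(** * Payoffs *)

Section Payoff.
Variables (N : nat) (D : nat -> (nat -> R) -> Prop) (f : R -> nat -> (nat -> R) -> R).
Hypothesis hD : forall i q, (i < N)%nat -> D i q -> inE N i q.
Hypothesis hC : condC N D f.
Hypothesis hI : condI N D f.

Lemma inQ_is_generator Q : inQ N D Q -> is_generator N Q.
Proof. intros hQ k Hk. apply hD; auto. Qed.

(* (C) gives continuity on [0, oo) only, so f is extended to t < 0 by its value at 0. *)
Definition f_ext (t : R) (j : nat) (q : nat -> R) : R := f (Rmax 0 t) j q.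

Lemma Rabs_Rmax_0_le x y : Rabs (Rmax 0 x - Rmax 0 y) <= Rabs (x - y).
Proof.
  unfold Rmax. destruct (Rle_dec 0 x), (Rle_dec 0 y).
  - lra.
  - rewrite Rminus_0_r, !Rabs_right; lra.
  - rewrite Rminus_0_l, Rabs_Ropp, Rabs_right, Rabs_left; lra.
  - rewrite Rminus_0_r, Rabs_R0. apply Rabs_pos.
Qed.

Lemma f_ext_continuous j q x : (j < N)%nat -> D j q -> continuous (fun t => f_ext t j q) x.
Proof.
  intros Hj Hq. apply continuity_pt_filterlim.
  intros eps Heps. destruct (hC j q Hj Hq (Rmax 0 x) (Rmax_l _ _) eps Heps) as [d [Hd Hx]].
  exists d. split; auto. intros y [_ Hy]. simpl in *. unfold R_dist in *.
  apply Hx; [apply Rmax_l|]. eapply Rle_lt_trans; [apply Rabs_Rmax_0_le|auto].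
Qed.

(* Expected payoff rate at time t of the chain with generator Q that is in state k at time s. *)
Definition payoff_rate (Q : nat -> nat -> R) (s : R) (k : nat) (t : R) : R :=
  sumR N (fun j => trans N Q (t - s) k j * f_ext t j (row Q j)).

Definition tail_value (Q : nat -> nat -> R) (s : R) (k : nat) : R :=
  int_from s (payoff_rate Q s k).

Lemma payoff_rate_continuous Q s k x : inQ N D Q -> continuous (payoff_rate Q s k) x.
Proof.
  intros hQ. apply continuous_sumR. intros j Hj.
  apply (continuous_mult (fun t => trans N Q (t - s) k j)); [|apply f_ext_continuous; auto].
  apply (continuous_comp (fun t => t - s) (fun t => trans N Q t k j));
    [|apply trans_continuous; auto].
  apply (continuous_minus (fun t => t) (fun _ => s)); [apply continuous_id|apply continuous_const].
Qed.

Local Hint Resolve payoff_rate_continuous : core.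

Definition payoff_dominated (c t y : R) : Prop :=
  exists j q, (j < N)%nat /\ D j q /\ norm1 N q <= c /\ y <= Rabs (f t j q).

Lemma condI_bound c : 0 < c -> exists M, forall a b psi, 0 <= a <= b -> ex_RInt psi a b ->
  (forall t, a <= t <= b -> payoff_dominated c t (psi t)) -> RInt psi a b <= M.
Proof.
  intros Hc. destruct (hI c Hc) as [G [_ [_ [HEG [M HM]]]]].
  exists M. intros a b psi [Ha Hab] Hpsi Hdom.
  set (chi t := if Rle_dec a t then psi t else 0).
  assert (Hchi0 : forall x, Rmin 0 a < x < Rmax 0 a -> 0 = chi x).
  { intros x. rewrite Rmin_left, Rmax_right by auto. intros Hx.
    unfold chi. destruct (Rle_dec a x); auto; lra. }
  assert (Hchi : forall x, Rmin a b < x < Rmax a b -> psi x = chi x).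
  { intros x. rewrite Rmin_left, Rmax_right by auto. intros Hx.
    unfold chi. destruct (Rle_dec a x); auto; lra. }
  assert (I0 : ex_RInt chi 0 a) by (apply (ex_RInt_ext (fun _ => 0)); auto; apply ex_RInt_const).
  assert (I1 : ex_RInt chi a b) by (apply (ex_RInt_ext psi); auto).
  assert (I2 : ex_RInt chi 0 b) by (apply (ex_RInt_Chasles chi 0 a b); auto).
  replace (RInt psi a b) with (RInt chi 0 b).
  2:{ rewrite <- (RInt_Chasles chi 0 a b), <- (RInt_ext _ _ 0 a Hchi0), <- (RInt_ext _ _ a b Hchi)
        by auto.
      rewrite RInt_const. unfold plus, scal; simpl; unfold mult; simpl. ring. }
  rewrite (RInt_Reals chi 0 b (ex_RInt_Reals_0 _ _ _ I2)). apply HM; [lra|].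
  destruct (Hdom a ltac:(lra)) as [j0 [q0 [Hj0 [Hq0 [Hn0 _]]]]].
  intros t r Ht Hr. apply HEG; [lra|]. unfold chi in Hr. destruct (Rle_dec a t).
  - destruct (Hdom t ltac:(lra)) as [j [q [Hj [Hq [Hn Hle]]]]].
    exists j, q. repeat split; auto. lra.
  - exists j0, q0. repeat split; auto. pose proof (Rabs_pos (f t j0 q0)). lra.
Qed.

Definition rate_bound (Q : nat -> nat -> R) : R := 1 + sumR N (fun j => norm1 N (row Q j)).

Lemma norm1_ge0 q : 0 <= norm1 N q.
Proof. apply sumR_nonneg. intros; apply Rabs_pos. Qed.

Lemma rate_bound_pos Q : 0 < rate_bound Q.
Proof.
  unfold rate_bound.
  pose proof (sumR_nonneg N (fun j => norm1 N (row Q j)) (fun j _ => norm1_ge0 _)). lra.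
Qed.

Lemma payoff_rate_dominated Q s k t : inQ N D Q -> 0 <= s <= t -> (k < N)%nat ->
  payoff_dominated (rate_bound Q) t (Rabs (payoff_rate Q s k t)).
Proof.
  intros hQ Hst Hk.
  destruct (Rabs_trans_average_le N Q (inQ_is_generator Q hQ) (t - s) k
             (fun j => f_ext t j (row Q j))) as [j [Hj Hle]]; [lra|auto|].
  exists j, (row Q j). split; [auto|split; [apply hQ; auto|split]].
  - unfold rate_bound.
    pose proof (sumR_term_le N (fun j => norm1 N (row Q j)) j Hj (fun _ _ => norm1_ge0 _)). lra.
  - unfold payoff_rate, f_ext in *. rewrite Rmax_right in * by lra. exact Hle.
Qed.

Lemma RInt_abs_payoff_rate_le Q : inQ N D Q ->
  exists M, forall s k T, 0 <= s <= T -> (k < N)%nat ->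
  RInt (fun t => Rabs (payoff_rate Q s k t)) s T <= M.
Proof.
  intros hQ. destruct (condI_bound (rate_bound Q) (rate_bound_pos Q)) as [M HM].
  exists M. intros s k T Hs Hk. apply HM; auto.
  - apply ex_RInt_continuous_R. intros. apply continuous_Rabs_comp. auto.
  - intros t Ht. apply payoff_rate_dominated; auto. lra.
Qed.

Lemma is_RInt_from_tail_value Q s k : inQ N D Q -> 0 <= s -> (k < N)%nat ->
  is_RInt_from s (payoff_rate Q s k) (tail_value Q s k).
Proof.
  intros hQ Hs Hk. destruct (RInt_abs_payoff_rate_le Q hQ) as [M HM].
  destruct (ex_RInt_from_abs_bounded s (payoff_rate Q s k) M) as [l Hl]; auto.
  unfold tail_value. now rewrite (int_from_ext_eq s _ (payoff_rate Q s k) l) by auto.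
Qed.

Lemma tail_value_bounded Q : inQ N D Q -> exists M, forall s k, 0 <= s -> (k < N)%nat ->
  Rabs (tail_value Q s k) <= M.
Proof.
  intros hQ. destruct (RInt_abs_payoff_rate_le Q hQ) as [M HM].
  exists M. intros s k Hs Hk.
  apply (Rabs_RInt_from_le s (payoff_rate Q s k)); [apply is_RInt_from_tail_value; auto|].
  intros T HT. eapply Rle_trans; [apply abs_RInt_le; auto using ex_RInt_continuous_R|].
  apply HM; auto.
Qed.

Lemma Fval_tail_value Q k : inQ N D Q -> (k < N)%nat -> Fval N f Q k = tail_value Q 0 k.
Proof.
  intros hQ Hk. apply (int_from_ext_eq 0 _ (payoff_rate Q 0 k)); auto.
  - intros t Ht. apply sumR_ext. intros j Hj. unfold f_ext.
    now rewrite Rminus_0_r, Rmax_right by lra.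
  - apply is_RInt_from_tail_value; auto. lra.
Qed.

Lemma sumR_trans_payoff_rate Q Q' e i t : (i < N)%nat ->
  sumR N (fun k => trans N Q e i k * payoff_rate Q' e k t)
  = sumR N (fun j => sumR N (fun k => trans N Q e i k * trans N Q' (t - e) k j)
                     * f_ext t j (row Q' j)).
Proof.
  intros Hi. unfold payoff_rate.
  rewrite (sumR_ext N _ (fun k => sumR N (fun j =>
             trans N Q e i k * trans N Q' (t - e) k j * f_ext t j (row Q' j))))
    by (intros; rewrite <- sumR_scal_l; apply sumR_ext; intros; ring).
  rewrite sumR_swap. apply sumR_ext. intros j Hj. now rewrite sumR_scal_r.
Qed.

Lemma tail_value_markov Q e i : inQ N D Q -> 0 <= e -> (i < N)%nat ->
  tail_value Q 0 i
  = RInt (payoff_rate Q 0 i) 0 e + sumR N (fun k => trans N Q e i k * tail_value Q e k).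
Proof.
  intros hQ He Hi.
  assert (H1 : is_RInt_from e (payoff_rate Q 0 i) (tail_value Q 0 i - RInt (payoff_rate Q 0 i) 0 e))
    by (apply is_RInt_from_Chasles, is_RInt_from_tail_value; auto; lra).
  assert (H2 : is_RInt_from e (payoff_rate Q 0 i)
                 (sumR N (fun k => trans N Q e i k * tail_value Q e k))).
  { apply (is_RInt_from_ext e (fun t => sumR N (fun k => trans N Q e i k * payoff_rate Q e k t))).
    - intros t _. rewrite sumR_trans_payoff_rate by auto. apply sumR_ext. intros j Hj.
      rewrite <- trans_add by auto. unfold payoff_rate. f_equal. f_equal. ring.
    - apply is_RInt_from_lin_comb; auto. intros k Hk. apply is_RInt_from_tail_value; auto. }
  pose proof (filterlim_locally_unique _ _ _ H1 H2). lra.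
Qed.

Lemma Fcomp_markov Q Qs e i : inQ N D Q -> inQ N D Qs -> 0 < e -> (i < N)%nat ->
  Fcomp N f Q Qs e i
  = RInt (payoff_rate Q 0 i) 0 e + sumR N (fun k => trans N Q e i k * tail_value Qs e k).
Proof.
  intros hQ hQs He Hi. unfold Fcomp.
  assert (Heq : forall t, 0 < t -> payoff_rate Q 0 i t
                  = sumR N (fun j => trans N Q t i j * f t j (row Q j))).
  { intros t Ht. apply sumR_ext. intros j Hj. unfold f_ext.
    now rewrite Rminus_0_r, Rmax_right by lra. }
  assert (Hin : forall x, Rmin 0 e < x < Rmax 0 e -> payoff_rate Q 0 i x
                  = sumR N (fun j => trans N Q x i j * f x j (row Q j))).
  { intros x. rewrite Rmin_left, Rmax_right by lra. intros Hx. apply Heq. lra. }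
  f_equal.
  - rewrite Defs_RInt_eq, <- (RInt_ext _ _ 0 e Hin); auto.
    apply (ex_RInt_ext _ _ 0 e Hin), ex_RInt_continuous_R. auto.
  - apply (int_from_ext_eq e _ (fun t => sumR N (fun k => trans N Q e i k * payoff_rate Qs e k t))).
    + intros x. apply continuous_sumR. intros k Hk.
      apply (continuous_mult (fun _ => trans N Q e i k)); [apply continuous_const|auto].
    + intros t Ht. rewrite sumR_trans_payoff_rate by auto. apply sumR_ext. intros j Hj.
      unfold f_ext. now rewrite Rmax_right by lra.
    + apply is_RInt_from_lin_comb; auto.
      intros k Hk. apply is_RInt_from_tail_value; auto. lra.
Qed.

Lemma Rabs_tail_value_sub_le Q M e k : inQ N D Q -> 0 < e -> (k < N)%nat ->
  (forall l, (l < N)%nat -> Rabs (tail_value Q e l) <= M) ->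
  Rabs (tail_value Q e k - tail_value Q 0 k)
  <= Rabs (RInt (payoff_rate Q 0 k) 0 e)
     + sumR N (fun l => Rabs (trans N Q e k l - kdelta k l) * M).
Proof.
  intros hQ He Hk HM. rewrite (tail_value_markov Q e k) by (auto; lra).
  set (S := sumR N (fun l => (trans N Q e k l - kdelta k l) * tail_value Q e l)).
  assert (HS : sumR N (fun l => trans N Q e k l * tail_value Q e l) = tail_value Q e k + S).
  { unfold S. rewrite (sumR_ext _ _ (fun l => (trans N Q e k l - kdelta k l) * tail_value Q e l
                                             + kdelta k l * tail_value Q e l)) by (intros; ring).
    rewrite sumR_plus, sumR_kdelta_l by auto. ring. }
  rewrite HS.
  replace (tail_value Q e k - (RInt (payoff_rate Q 0 k) 0 e + (tail_value Q e k + S)))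
    with (- RInt (payoff_rate Q 0 k) 0 e - S) by ring.
  eapply Rle_trans; [apply Rabs_triang|]. rewrite !Rabs_Ropp.
  apply Rplus_le_compat_l. eapply Rle_trans; [apply Rabs_sumR_le|].
  apply sumR_le. intros l Hl. rewrite Rabs_mult.
  apply Rmult_le_compat_l; [apply Rabs_pos|auto].
Qed.

Lemma tail_value_right_continuous Q k : inQ N D Q -> (k < N)%nat ->
  filterlim (fun e => tail_value Q e k) (at_right 0) (locally (tail_value Q 0 k)).
Proof.
  intros hQ Hk. destruct (tail_value_bounded Q hQ) as [M HM].
  set (h e := Rabs (RInt (payoff_rate Q 0 k) 0 e)
              + sumR N (fun l => Rabs (trans N Q e k l - kdelta k l) * M)).
  apply (filterlim_at_right_0_le _ h).
  { intros e He. apply Rabs_tail_value_sub_le; auto. intros l Hl. apply HM; auto; lra. }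
  replace 0 with (h 0) at 2.
  - apply filterlim_at_right_continuous, (continuous_plus (fun e => Rabs (RInt _ 0 e))).
    + apply continuous_Rabs_comp, RInt_continuous_upper. auto.
    + apply continuous_sumR. intros l Hl.
      apply (continuous_mult (fun e => Rabs (trans N Q e k l - kdelta k l)));
        [|apply continuous_const].
      apply continuous_Rabs_comp, (continuous_minus (fun e => trans N Q e k l));
        [apply trans_continuous; auto|apply continuous_const].
  - unfold h. rewrite RInt_point. unfold zero; simpl.
    rewrite (sumR_ext _ _ (fun _ => 0)), Rabs_R0, sumR_zero; [ring|].
    intros l Hl. rewrite trans_0 by auto. unfold Rminus. rewrite Rplus_opp_r, Rabs_R0. ring.
Qed.

Lemma payoff_rate_0 Q i : (i < N)%nat -> payoff_rate Q 0 i 0 = f 0 i (row Q i).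
Proof.
  intros Hi. unfold payoff_rate, f_ext. rewrite Rminus_0_r, Rmax_left by lra.
  rewrite (sumR_ext _ _ (fun j => kdelta i j * f 0 j (row Q j))) by (intros; rewrite trans_0; auto).
  now apply sumR_kdelta_l.
Qed.

Lemma weak_equilibrium_quotient_lim Qs Q i : inQ N D Qs -> inQ N D Q -> (i < N)%nat ->
  filterlim (fun e => (Fval N f Qs i - Fcomp N f Q Qs e i) / e) (at_right 0)
            (locally (Gamma N f Qs i (row Qs i) - Gamma N f Qs i (row Q i))).
Proof.
  intros hQs hQ Hi.
  set (du t := payoff_rate Qs 0 i t - payoff_rate Q 0 i t).
  set (dP k e := trans N Qs e i k - trans N Q e i k).
  assert (Hdu : forall x, continuous du x)
    by (intros x; apply (continuous_minus (payoff_rate Qs 0 i)); auto).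
  apply (filterlim_ext_loc (fun e => RInt du 0 e / e
           + sumR N (fun k => (dP k e - dP k 0) / e * tail_value Qs e k))).
  { unfold at_right, within. apply filter_forall. intros e He.
    rewrite Fval_tail_value, (tail_value_markov Qs e i), (Fcomp_markov Q Qs e i) by (auto; lra).
    unfold du. rewrite (RInt_minus (V := R_CompleteNormedModule) (payoff_rate Qs 0 i))
      by (apply ex_RInt_continuous_R; auto).
    unfold dP. rewrite (sumR_ext _ _ (fun k => / e * (trans N Qs e i k * tail_value Qs e k
                                                    - trans N Q e i k * tail_value Qs e k))).
    - rewrite sumR_scal_l, sumR_minus. unfold minus, plus, opp; simpl. field. lra.
    - intros k Hk. rewrite !trans_0 by auto. field. lra. }
  replace (Gamma N f Qs i (row Qs i) - Gamma N f Qs i (row Q i))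
    with (du 0 + sumR N (fun k => (Qs i k - Q i k) * tail_value Qs 0 k)).
  - apply filterlim_Rplus; [apply RInt_average_at_right_0; auto|].
    apply filterlim_sumR. intros k Hk. apply filterlim_Rmult.
    + apply is_derive_at_right_quotient, (is_derive_minus (fun e => trans N Qs e i k));
        apply is_derive_trans_0; auto.
    + apply tail_value_right_continuous; auto.
  - unfold du, Gamma. rewrite !payoff_rate_0 by auto.
    rewrite (sumR_ext _ (fun k => (Qs i k - Q i k) * tail_value Qs 0 k)
               (fun k => row Qs i k * Fval N f Qs k - row Q i k * Fval N f Qs k))
      by (intros k Hk; rewrite Fval_tail_value by auto; unfold row; ring).
    rewrite sumR_minus. ring.
Qed.

End Payoff.

Lemma liminf_nonneg_iff (g : R -> R) L : filterlim g (at_right 0) (locally L) ->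
  (forall delta, 0 < delta -> exists eta, 0 < eta /\ forall e, 0 < e < eta -> - delta <= g e)
  <-> 0 <= L.
Proof.
  rewrite filterlim_at_right_0_eps. intros HL. split.
  - intros H. apply Rnot_lt_le. intros HL0.
    destruct (H (- L / 2)) as [eta [Heta Hg]]; [lra|].
    destruct (HL (- L / 2)) as [d [Hd Hx]]; [lra|].
    set (e := Rmin eta d / 2).
    assert (0 < Rmin eta d) by (apply Rmin_pos; auto).
    pose proof (Rmin_l eta d). pose proof (Rmin_r eta d).
    specialize (Hg e ltac:(unfold e; lra)). specialize (Hx e ltac:(unfold e; lra)).
    apply Rabs_def2 in Hx. lra.
  - intros HL0 delta Hdelta. destruct (HL delta Hdelta) as [d [Hd Hx]].
    exists d. split; auto. intros e He. specialize (Hx e He). apply Rabs_def2 in Hx. lra.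
Qed.

Theorem mainTheorem2 (N : nat) (D : nat -> (nat -> R) -> Prop)
  (f : R -> nat -> (nat -> R) -> R)
  (hD : forall i q, (i < N)%nat -> D i q -> inE N i q)
  (hC : condC N D f) (hI : condI N D f) (hH : condH N D f)
  (Qs : nat -> nat -> R) (hQs : inQ N D Qs) :
  weak_equilibrium N D f Qs <->
  (forall i Q, (i < N)%nat -> inQ N D Q ->
     Gamma N f Qs i (row Q i) <= Gamma N f Qs i (row Qs i)).
Proof.
  assert (Hiff : forall Q i, inQ N D Q -> (i < N)%nat ->
    (forall delta, 0 < delta -> exists eta, 0 < eta /\ forall e, 0 < e < eta ->
       - delta <= (Fval N f Qs i - Fcomp N f Q Qs e i) / e)
    <-> 0 <= Gamma N f Qs i (row Qs i) - Gamma N f Qs i (row Q i))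
    by (intros; apply liminf_nonneg_iff, (weak_equilibrium_quotient_lim N D); auto).
  split.
  - intros Hwe i Q Hi hQ. pose proof (proj1 (Hiff Q i hQ Hi) (Hwe Q i hQ Hi)). lra.
  - intros HG Q i hQ Hi. apply (Hiff Q i hQ Hi). pose proof (HG i Q Hi hQ). lra.
Qed.
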